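(* Let $r>0$, $T>0$, let $\sigma_1$ be a nonnegative random variable with $P\{\sigma_1>x\}=L(x)/x^{\alpha}$, where $\alpha>0$ and $L$ is continuous, slowly varying, with $\lim_{x\to\infty}L(x)=\infty$. Let $V$ be uniformly distributed on $(0,T]$ and independent of $\sigma_1$, and let $F_T(x)=P\{e^{-rV}\sigma_1\le x\}$. Then $F_T$ has a regularly varying tail. *)

From HB Require Import structures.
From mathcomp Require Import all_boot all_order all_algebra.
From mathcomp Require Import all_classical all_reals all_analysis.
Set Implicit Arguments. Unset Strict Implicit. Unset Printing Implicit Defensive.
Import Order.TTheory GRing.Theory Num.Theory.
Import numFieldNormedType.Exports.
Local Open Scope classical_set_scope.
Local Open Scope ring_scope.

Definition slowly_varying (R : realType) (L : R -> R) : Prop :=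
  (\forall x \near +oo, 0 < L x) /\
  forall t : R, 0 < t -> (fun x => L (t * x) / L x) @ +oo --> (1 : R).

Definition regularly_varying (R : realType) (f : R -> R) (rho : R) : Prop :=
  (\forall x \near +oo, 0 < f x) /\
  forall t : R, 0 < t -> (fun x => f (t * x) / f x) @ +oo --> t `^ rho.

Definition has_regularly_varying_tail (R : realType) (F : R -> R) : Prop :=
  exists rho : R, regularly_varying (fun x => 1 - F x) rho.

From HB Require Import structures.
From mathcomp Require Import all_boot all_order all_algebra.
From mathcomp Require Import all_classical all_reals all_analysis.
From mathcomp Require Import ring lra.
Import Order.TTheory GRing.Theory Num.Theory.
Import numFieldNormedType.Exports.
Local Open Scope classical_set_scope.
Local Open Scope ring_scope.

(* Write tau = t^(-alpha) and G for the tail of sigma1; the tail of the product is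
   Phi(x) = P(e^(-rV) sigma1 > x, 0 < V <= T).  Cut (0, T] into n pieces of width h.
   On the piece V in (a, a + h] the event is squeezed between
   {sigma1 > x e^(r(a+h))} and {sigma1 > x e^(ra)}, so by independence the piece of
   Phi(x) lies between G(e^(rh) y) p and G(y) p, with y = x e^(ra) and p the
   probability of the piece.  Regular variation of G gives, for x large and
   uniformly in a, G(e^(rh) y) >= G(y) / eta^2 once e^(r h |alpha|) <= eta, and
   G(t y) within a factor eta of tau G(y).  Hence every piece of Phi(t x) is within
   eta^5 of tau times the same piece of Phi(x), and so are the sums; eta is arbitrary. *)

Section MulClose.
Context {R : realFieldType}.
Implicit Types k l u v w : R.

Definition mul_close k u v := u <= k * v /\ v <= k * u.

Lemma mul_closeC {k u v} : mul_close k u v -> mul_close k v u.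
Proof. by move=> []. Qed.

Lemma mul_close_trans {k1 k2 u v w} : 0 <= k1 -> 0 <= k2 ->
  mul_close k1 u v -> mul_close k2 v w -> mul_close (k1 * k2) u w.
Proof.
move=> k10 k20 [uv vu] [vw wv]; split.
- by apply: (le_trans uv); rewrite -mulrA; exact: ler_wpM2l.
- by apply: (le_trans wv); rewrite [k1 * k2]mulrC -mulrA; exact: ler_wpM2l.
Qed.

Lemma mul_closeZ {k c u v} : 0 <= c ->
  mul_close k u v -> mul_close k (c * u) (c * v).
Proof. by move=> c0 [uv vu]; split; rewrite mulrCA; exact: ler_wpM2l. Qed.

Lemma mul_closeD {k u1 u2 v1 v2} : mul_close k u1 v1 -> mul_close k u2 v2 ->
  mul_close k (u1 + u2) (v1 + v2).
Proof. by move=> [? ?] [? ?]; rewrite /mul_close !mulrDr; split; exact: lerD. Qed.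

Lemma mul_close_sandwich l {k u v} : 1 <= k -> 0 <= v ->
  l <= u -> u <= v -> v <= k * l -> mul_close k u v.
Proof.
move=> k1 v0 lu uv vl; split.
- by apply: (le_trans uv); rewrite ler_peMl.
- by apply: (le_trans vl); apply: ler_wpM2l => //; lra.
Qed.

Context {T : Type} (F : set_system T) {FF : Filter F}.

Lemma near_mul_close_of_cvg (f g : T -> R) l k : 0 < l -> 1 < k ->
  (\forall x \near F, 0 < g x) -> (fun x => f x / g x) @ F --> l ->
  \forall x \near F, mul_close k (f x) (l * g x).
Proof.
move=> l0 k1 gpos fg.
have kV0 : 0 < k^-1 by rewrite invr_gt0; lra.
have kkV : k * k^-1 = 1 by rewrite divff // gt_eqF //; lra.
have eps0 : 0 < l * (1 - k^-1) by apply: mulr_gt0 => //; rewrite subr_gt0 invf_lt1; lra.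
near=> x.
have gx : 0 < g x by near: x; exact: gpos.
have : `|l - f x / g x| <= l * (1 - k^-1).
  by near: x; exact: (cvgrPdist_le _ _).1 fg _ eps0.
rewrite ler_norml => /andP[lo hi].
have -> : f x = f x / g x * g x by rewrite divfK // gt_eqF.
set q := f x / g x in lo hi *.
(* [k + k^-1 >= 2] turns [q <= l (2 - k^-1)] into [q <= k l]. *)
have kk : 2 <= k + k^-1 by nra.
have qkl : q <= k * l by nra.
have lkq : l <= k * q.
  have : k * (l * k^-1) <= k * q by apply: ler_wpM2l; lra.
  by rewrite mulrCA kkV mulr1.
by split; rewrite mulrA; apply: ler_wpM2r => //; exact: ltW.
Unshelve. all: by end_near.
Qed.

Lemma cvg_of_near_mul_close (f g : T -> R) l : 0 < l ->
  (\forall x \near F, 0 < g x) ->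
  (forall k, 1 < k -> \forall x \near F, mul_close k (f x) (l * g x)) ->
  (fun x => f x / g x) @ F --> l.
Proof.
move=> l0 gpos close; apply/cvgrPdist_le => eps eps0.
have k1 : 1 < 1 + eps / l by rewrite ltrDl divr_gt0.
have lk : (1 + eps / l) * l = l + eps by rewrite mulrDl mul1r divfK // gt_eqF.
near=> x.
have gx : 0 < g x by near: x; exact: gpos.
have [fl lf] : mul_close (1 + eps / l) (f x) (l * g x) by near: x; exact: close.
set q := f x / g x.
have fq : f x = q * g x by rewrite /q divfK // gt_eqF.
rewrite fq mulrA ler_pM2r // in fl.
rewrite fq mulrA ler_pM2r // in lf.
have qk : q <= l + eps by rewrite -lk.
rewrite ler_norml; apply/andP; split; first lra.
have [lq|ql] := leP l q; first lra.
have : eps / l * q <= eps / l * l by apply: ler_wpM2l; [exact: ltW (divr_gt0 _ _)| exact: ltW].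
rewrite divfK ?gt_eqF //; nra.
Unshelve. all: by end_near.
Qed.

End MulClose.

Lemma near_pinfty_mul {R : realFieldType} {Q : R -> Prop} {t : R} : 0 < t ->
  (\forall y \near +oo, Q y) -> \forall x \near +oo, forall s, t <= s -> Q (s * x).
Proof.
move=> t0 [M [Mreal HM]]; exists (Num.max (M / t) 0); split; first exact: num_real.
move=> x; rewrite gt_max => /andP[Mx x0] s ts; apply: HM.
have tx : M < t * x by rewrite mulrC -ltr_pdivrMr.
by apply: lt_le_trans tx _; rewrite ler_pM2r.
Qed.

Lemma exists_exprn_eq {R : realType} n {k : R} : 1 < k ->
  exists2 eta : R, 1 < eta & eta ^+ n.+1 = k.
Proof.
move=> k1; exists (expR (ln k / n.+1%:R)); first by rewrite expR_gt1 divr_gt0 ?ln_gt0.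
by rewrite -expRM_natr divfK ?lnK ?posrE // ?pnatr_eq0 //; lra.
Qed.

Lemma exists_mesh {R : realType} (q : R) {r T eta : R} : 0 <= r -> 0 < T -> 1 < eta ->
  exists2 n : nat, (0 < n)%N & expR (r * (T / n%:R)) `^ q <= eta.
Proof.
move=> r0 T0 eta1; have leta : 0 < ln eta by exact: ln_gt0.
have m0 : 0 <= `|q| * r * T / ln eta.
  by apply: divr_ge0; [exact/mulr_ge0/ltW/T0/mulr_ge0 | exact: ltW].
have mn := archi_boundP m0; set n := Num.Def.archi_bound _ in mn.
have n0 : 0 < n%:R :> R by exact: le_lt_trans m0 mn.
exists n; first by rewrite -(ltr0n R).
rewrite -expRM -[eta]lnK ?posrE ?(lt_trans ltr01) // ler_expR.
apply: le_trans (_ : `|q| * r * T / n%:R <= _).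
  rewrite mulrC !mulrA; apply: ler_wpM2r; first by rewrite invr_ge0 ltW.
  by apply: ler_wpM2r; [exact: ltW | apply: ler_wpM2r => //; exact: ler_norm].
by rewrite ler_pdivrMr // [ln _ * _]mulrC -ler_pdivrMr // ltW.
Qed.

Section RegularVariation.
Context {R : realType}.
Implicit Types (f L : R -> R) (rho : R).

Lemma regularly_varying_mul_close {f rho s k} : regularly_varying f rho ->
  0 < s -> 1 < k -> \forall y \near +oo, mul_close k (f (s * y)) (s `^ rho * f y).
Proof.
by move=> [fpos fratio] s0 k1; apply: near_mul_close_of_cvg => //;
  [exact: powR_gt0 | exact: fratio].
Qed.

Lemma regularly_varying_le_near {f rho s k} : regularly_varying f rho ->
  0 < s -> 1 < k -> \forall y \near +oo, f y <= k * s `^ (- rho) * f (s * y).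
Proof.
move=> frv s0 k1; have sr0 : 0 < s `^ rho by exact: powR_gt0.
apply: filterS (regularly_varying_mul_close frv s0 k1) => y [_ le].
by rewrite powRN mulrAC ler_pdivlMr // mulrC.
Qed.

Lemma eq_regularly_varying {f g rho} : (forall x, 0 < x -> f x = g x) ->
  regularly_varying f rho -> regularly_varying g rho.
Proof.
move=> fg [fpos fratio]; split.
  near=> x; rewrite -fg; first by near: x; exact: fpos.
  by near: x; exact: nbhs_pinfty_gt (num_real 0).
move=> t t0; apply: cvg_trans (fratio t t0); apply: near_eq_cvg.
near=> x; have x0 : 0 < x by near: x; exact: nbhs_pinfty_gt (num_real 0).
by rewrite /= !fg // mulr_gt0.
Unshelve. all: by end_near.
Qed.

Lemma slowly_varying_mul_powR {L} rho : slowly_varying L ->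
  regularly_varying (fun x => L x * x `^ rho) rho.
Proof.
move=> [Lpos Lratio]; split.
  near=> x; apply: mulr_gt0; first by near: x; exact: Lpos.
  by apply: powR_gt0; near: x; exact: nbhs_pinfty_gt (num_real 0).
move=> t t0; rewrite -[t `^ rho]mulr1.
apply: cvg_trans (cvgMl_tmp (a := t `^ rho) (Lratio t t0)); apply: near_eq_cvg.
near=> x; have x0 : 0 < x by near: x; exact: nbhs_pinfty_gt (num_real 0).
have Lx : 0 < L x by near: x; exact: Lpos.
have xr : 0 < x `^ rho by exact: powR_gt0.
rewrite /= powRM ?ltW //; field.
by apply/andP; split; rewrite gt_eqF.
Unshelve. all: by end_near.
Qed.

End RegularVariation.

Section Tail.
Context {d : measure_display} {Omega : measurableType d} {R : realType}.
Variable P : probability Omega R.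
Implicit Types (X : Omega -> R) (x : R).

Definition tail X x := fine (P [set w | x < X w]).

Lemma fineP_ge0 (A : set Omega) : 0 <= fine (P A).
Proof. exact/fine_ge0/measure_ge0. Qed.

Lemma EFin_fineP {A : set Omega} : measurable A -> (fine (P A))%:E = P A.
Proof. by move=> mA; rewrite fineK // fin_num_measure. Qed.

Lemma le_fineP {A B : set Omega} : measurable A -> measurable B ->
  A `<=` B -> fine (P A) <= fine (P B).
Proof.
move=> mA mB AB.
apply: fine_le; [exact: fin_num_measure | exact: fin_num_measure |].
by apply: le_measure; rewrite ?inE.
Qed.

Lemma measurable_preimage_itv {X} (i : interval R) :
  measurable_fun setT X -> measurable (X @^-1` [set` i]).
Proof. by move=> mX; have := mX measurableT _ (measurable_itv i); rewrite setTI. Qed.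

Lemma tail_setE X x : [set w | x < X w] = X @^-1` `]x, +oo[.
Proof. by apply/seteqP; split => w /=; rewrite in_itv /= andbT. Qed.

Lemma tail_cdf X x : measurable_fun setT X ->
  1 - fine (P [set w | X w <= x]) = tail X x.
Proof.
move=> mX; have mgt := measurable_preimage_itv `]x, +oo[ mX.
have -> : [set w | X w <= x] = ~` [set w | x < X w].
  by apply/seteqP; split => w /=; rewrite ltNge; case: (X w <= x).
rewrite -tail_setE in mgt; rewrite (probability_setC P) //.
by rewrite -(EFin_fineP mgt) -EFinB /= subKr.
Qed.

End Tail.

Section ScaledByExpR.
Context {d : measure_display} {Omega : measurableType d} {R : realType}.
Variables (P : probability Omega R) (r T : R) (sigma V : Omega -> R).
Hypotheses (r0 : 0 <= r) (T0 : 0 < T)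
  (msigma : measurable_fun setT sigma) (mV : measurable_fun setT V)
  (V_supp : P (V @^-1` `]0, T]) = 1%E)
  (indep : forall A B : set R, measurable A -> measurable B ->
     P (sigma @^-1` A `&` V @^-1` B) = (P (sigma @^-1` A) * P (V @^-1` B))%E).

Let Y w := expR (- r * V w) * sigma w.
Let pV a b := fine (P (V @^-1` `]a, b])).
Let tail_on x a b := fine (P ([set w | x < Y w] `&` V @^-1` `]a, b])).

Let mVab a b : measurable (V @^-1` `]a, b]) := measurable_preimage_itv _ mV.

Lemma measurable_expR_mul : measurable_fun setT Y.
Proof.
apply: measurable_realfun.measurable_funM => //.
apply: measurableT_comp; first exact: measurable_realfun.measurable_expR.
exact: measurable_realfun.measurable_funM.
Qed.

Let mYV x a b : measurable ([set w | x < Y w] `&` V @^-1` `]a, b]).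
Proof.
apply: measurableI => //; rewrite tail_setE.
exact/measurable_preimage_itv/measurable_expR_mul.
Qed.

Let mSV y a b : measurable (sigma @^-1` `]y, +oo[ `&` V @^-1` `]a, b]).
Proof. by apply: measurableI => //; exact: measurable_preimage_itv. Qed.

Lemma tail_on_full x : tail P Y x = tail_on x 0 T.
Proof.
have mE : measurable [set w | x < Y w].
  by rewrite tail_setE; exact/measurable_preimage_itv/measurable_expR_mul.
set E := [set w | x < Y w] in mE *.
have null : P (E `\` V @^-1` `]0, T]) = 0%E.
  have C0 : P (~` (V @^-1` `]0, T])) = 0%E.
    by rewrite (probability_setC P (mVab 0 T)) V_supp subee.
  apply/eqP; rewrite eq_le measure_ge0 andbT -C0.
  by apply: le_measure; rewrite ?inE; [exact: measurableD | exact: measurableC | move=> w []].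
by rewrite /tail (measureDI P mE (mVab 0 T)) [X in (X + _)%E]null add0e.
Qed.

Lemma tail_onD x {a b c} : a <= b -> b <= c ->
  tail_on x a c = tail_on x a b + tail_on x b c.
Proof.
move=> ab bc; rewrite /tail_on -fineD ?fin_num_measure //; congr fine.
rewrite -measureU //; last first.
  by apply/seteqP; split => // w [[_ /=]]; rewrite !in_itv /= => /andP[_ wb] [_ /andP[bw _]]; lra.
congr (P _); apply/seteqP; split => w /=; rewrite !in_itv /=.
  move=> [xw /andP[aw wc]]; have [wb|bw] := leP (V w) b.
    by left; split => //; apply/andP.
  by right; split => //; apply/andP.
by case=> -[xw /andP[w1 w2]]; split => //; apply/andP; split; lra.
Qed.

Lemma tail_on_box y a b :
  fine (P (sigma @^-1` `]y, +oo[ `&` V @^-1` `]a, b])) = tail P sigma y * pV a b.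
Proof.
rewrite indep // /tail tail_setE -(EFin_fineP P (mVab a b)).
by rewrite -(EFin_fineP P (measurable_preimage_itv _ msigma)).
Qed.

Let lt_Y x w : (x < Y w) = (x * expR (r * V w) < sigma w).
Proof. by rewrite /Y mulNr expRN mulrC ltr_pdivlMr ?expR_gt0. Qed.

Lemma tail_on_le x a b : 0 <= x -> 0 <= a ->
  tail_on x a b <= tail P sigma (x * expR (r * a)) * pV a b.
Proof.
move=> x0 a0; rewrite -tail_on_box /tail_on; apply: (le_fineP P (mYV _ _ _) (mSV _ _ _)).
move=> w [/=]; rewrite lt_Y.
rewrite !in_itv /= andbT => xw /andP[aw wb]; split; last by apply/andP.
apply: le_lt_trans _ xw.
by apply: ler_wpM2l => //; rewrite ler_expR; apply: ler_wpM2l => //; exact: ltW.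
Qed.

Lemma tail_on_ge x a b : 0 <= x ->
  tail P sigma (x * expR (r * b)) * pV a b <= tail_on x a b.
Proof.
move=> x0; rewrite -tail_on_box /tail_on; apply: (le_fineP P (mSV _ _ _) (mYV _ _ _)).
move=> w [/=]; rewrite lt_Y.
rewrite !in_itv /= andbT => xw /andP[aw wb]; split; last by apply/andP.
apply: le_lt_trans _ xw.
by apply: ler_wpM2l => //; rewrite ler_expR; apply: ler_wpM2l.
Qed.

Lemma tail_on_piece_close {x a h k} : 0 <= x -> 0 <= a -> 1 <= k ->
  tail P sigma (expR (r * a) * x) <=
    k * tail P sigma (expR (r * h) * (expR (r * a) * x)) ->
  mul_close k (tail_on x a (a + h)) (pV a (a + h) * tail P sigma (expR (r * a) * x)).
Proof.
move=> x0 a0 k1 osc.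
have pV0 : 0 <= pV a (a + h) := fineP_ge0 P _.
apply: (mul_close_sandwich (pV a (a + h) * tail P sigma (x * expR (r * (a + h))))) => //.
- exact/mulr_ge0/fineP_ge0.
- by rewrite mulrC; exact: tail_on_ge.
- by rewrite mulrC [_ * x]mulrC; exact: tail_on_le.
- rewrite mulrCA; apply: ler_wpM2l => //.
  suff -> : x * expR (r * (a + h)) = expR (r * h) * (expR (r * a) * x) by [].
  by rewrite mulrDr expRD; ring.
Qed.

Lemma tail_on_grid_close x x' c k h n : 0 <= h ->
  (forall a, 0 <= a -> mul_close k (tail_on x' a (a + h)) (c * tail_on x a (a + h))) ->
  mul_close k (tail_on x' 0 (n%:R * h)) (c * tail_on x 0 (n%:R * h)).
Proof.
move=> h0 piece; elim: n => [|n IHn].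
  have tail_on0 z : tail_on z 0 0 = 0.
    by have := tail_onD z (lexx 0) (lexx 0); lra.
  by rewrite mul0r !tail_on0 mulr0; split; rewrite mulr0.
have nh0 : 0 <= n%:R * h by exact: mulr_ge0.
have step : n%:R * h <= n%:R * h + h by lra.
rewrite -natr1 mulrDl mul1r (tail_onD x' nh0 step) (tail_onD x nh0 step) mulrDr.
exact: mul_closeD IHn (piece _ nh0).
Qed.

Variable rho : R.
Hypothesis tail_sigma_rv : regularly_varying (tail P sigma) rho.

Let G := tail P sigma.

Lemma tail_on_piece_ratio_close x t a h eta : 0 < x -> 0 < t -> 0 <= a -> 1 < eta ->
  let s := expR (r * a) in let c := expR (r * h) in
  mul_close eta (G (t * (s * x))) (t `^ rho * G (s * x)) ->
  G (s * x) <= eta ^+ 2 * G (c * (s * x)) ->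
  G (t * (s * x)) <= eta ^+ 2 * G (c * (t * (s * x))) ->
  mul_close (eta ^+ 2 * eta * eta ^+ 2)
    (tail_on (t * x) a (a + h)) (t `^ rho * tail_on x a (a + h)).
Proof.
move=> x0 t0 a0 eta1 s c close_t osc_x osc_tx.
have e0 : 0 <= eta by lra.
have e2 : 1 <= eta ^+ 2 by rewrite exprn_ege1 // ltW.
have e20 : 0 <= eta ^+ 2 by exact: exprn_ge0.
have p0 : 0 <= pV a (a + h) := fineP_ge0 P _.
have tr0 : 0 <= t `^ rho by exact/ltW/powR_gt0.
have piece_tx : mul_close (eta ^+ 2) (tail_on (t * x) a (a + h))
    (pV a (a + h) * G (t * (s * x))).
  by rewrite mulrCA; apply: tail_on_piece_close => //;
    [exact/ltW/mulr_gt0 | rewrite -mulrCA].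
have piece_x : mul_close (eta ^+ 2) (pV a (a + h) * (t `^ rho * G (s * x)))
    (t `^ rho * tail_on x a (a + h)).
  rewrite mulrCA; apply/mul_closeC/mul_closeZ => //.
  exact: tail_on_piece_close (ltW x0) a0 e2 osc_x.
exact: mul_close_trans (mulr_ge0 e20 e0) e20
  (mul_close_trans e20 e0 piece_tx (mul_closeZ p0 close_t)) piece_x.
Qed.

Lemma tail_on_ratio_close t eta : 0 < t -> 1 < eta -> \forall x \near +oo,
  mul_close (eta ^+ 2 * eta * eta ^+ 2) (tail_on (t * x) 0 T) (t `^ rho * tail_on x 0 T).
Proof.
move=> t0 eta1.
have [n n0 c_rho] := exists_mesh (- rho) r0 T0 eta1.
set h := T / n%:R in c_rho; set c := expR (r * h) in c_rho.
have osc : \forall y \near +oo, G y <= eta ^+ 2 * G (c * y).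
  near=> y.
  have : G y <= eta * c `^ (- rho) * G (c * y).
    by near: y; exact: regularly_varying_le_near tail_sigma_rv (expR_gt0 _) eta1.
  move/le_trans; apply; rewrite expr2 ler_wpM2r ?fineP_ge0 // ler_wpM2l //; lra.
have osc_t : \forall y \near +oo, G (t * y) <= eta ^+ 2 * G (c * (t * y)).
  by have := near_pinfty_mul t0 osc; apply: filterS => y; exact.
have ratio := regularly_varying_mul_close tail_sigma_rv t0 eta1.
pose good y := [/\ mul_close eta (G (t * y)) (t `^ rho * G y),
  G y <= eta ^+ 2 * G (c * y) & G (t * y) <= eta ^+ 2 * G (c * (t * y))].
have near_good : \forall x \near +oo, forall s, 1 <= s -> good (s * x).
  apply: near_pinfty_mul ltr01 _.
  by near=> y; split; near: y; [exact: ratio | exact: osc | exact: osc_t].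
near=> x.
have x0 : 0 < x by near: x; exact: nbhs_pinfty_gt (num_real 0).
have good_x : forall s, 1 <= s -> good (s * x) by near: x; exact: near_good.
have -> : T = n%:R * h by rewrite /h mulrC divfK // gt_eqF // ltr0n.
apply: tail_on_grid_close => [|a a0]; first by apply: divr_ge0; [exact: ltW | exact: ler0n].
have s1 : 1 <= expR (r * a) by rewrite -expR0 ler_expR; exact: mulr_ge0.
have [close_t osc_x osc_tx] := good_x _ s1.
exact: tail_on_piece_ratio_close.
Unshelve. all: by end_near.
Qed.

Lemma tail_on_near_gt0 : \forall x \near +oo, 0 < tail_on x 0 T.
Proof.
have s1 : 1 <= expR (r * T) by rewrite -expR0 ler_expR; exact/mulr_ge0/ltW.
near=> x.
have x0 : 0 < x by near: x; exact: nbhs_pinfty_gt (num_real 0).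
have Gpos : forall s, 1 <= s -> 0 < G (s * x).
  by near: x; exact: near_pinfty_mul ltr01 tail_sigma_rv.1.
apply: lt_le_trans (tail_on_ge x 0 T (ltW x0)).
by rewrite /pV V_supp mulr1 mulrC; exact: Gpos.
Unshelve. all: by end_near.
Qed.

Lemma regularly_varying_tail_expR_mul : regularly_varying (tail P Y) rho.
Proof.
have -> : tail P Y = fun x => tail_on x 0 T by apply: funext => x; exact: tail_on_full.
split; first exact: tail_on_near_gt0.
move=> t t0; apply: cvg_of_near_mul_close tail_on_near_gt0 _ => [|k k1].
  exact: powR_gt0.
have [eta eta1 <-] := exists_exprn_eq 4 k1.
have -> : eta ^+ 5 = eta ^+ 2 * eta * eta ^+ 2 by rewrite -exprSr -exprD.
exact: tail_on_ratio_close.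
Qed.

End ScaledByExpR.

Theorem lemma3p2 (R : realType) (d : measure_display) (Omega : measurableType d)
  (P : probability Omega R) (r T alpha : R) (L : R -> R)
  (sigma1 V : Omega -> R)
  (hr : 0 < r) (hT : 0 < T) (halpha : 0 < alpha)
  (msigma : measurable_fun setT sigma1) (mV : measurable_fun setT V)
  (sigma_nonneg : forall w, 0 <= sigma1 w)
  (Lcont : {in `]0, +oo[, continuous L})
  (Lslow : slowly_varying L)
  (Linfty : L x @[x --> +oo] --> +oo)
  (sigma_tail : forall x : R, 0 < x ->
     P [set w | sigma1 w > x] = (L x / x `^ alpha)%:E)
  (V_unif : forall A : set R, measurable A ->
     P (V @^-1` A) =
       mule (T^-1)%:E (lebesgue_measure (A `&` `]0, T])))
  (indep : forall A B : set R, measurable A -> measurable B ->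
     P (sigma1 @^-1` A `&` V @^-1` B) =
       (P (sigma1 @^-1` A) * P (V @^-1` B))%E) :
  has_regularly_varying_tail
    (fun x : R => fine (P [set w | expR (- r * V w) * sigma1 w <= x])).
Proof.
have V_supp : P (V @^-1` `]0, T]) = 1%E.
  rewrite V_unif // setIid lebesgue_measure_itv /= lte_fin hT /=.
  by rewrite oppr0 adde0 -EFinM mulVf // gt_eqF.
have tail_sigma : regularly_varying (tail P sigma1) (- alpha).
  apply: (eq_regularly_varying _ (slowly_varying_mul_powR (- alpha) Lslow)) => x x0.
  by rewrite /tail sigma_tail // powRN.
exists (- alpha).
have -> : (fun x => 1 - fine (P [set w | expR (- r * V w) * sigma1 w <= x])) =
    tail P (fun w => expR (- r * V w) * sigma1 w).
  by apply: funext => x; exact/tail_cdf/measurable_expR_mul.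
exact: regularly_varying_tail_expR_mul (ltW hr) hT msigma mV V_supp indep _ tail_sigma.
Qed.
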